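(* Let $k\ge1$ and $n$ be integers and let $a\to b$ be an edge of $G(n,k)$. Then its length $(b-a)_{k+1}$ equals $(n_k-n_{k+1}+2)_{k+1}$ if $b\le n_k-1$, and equals $(n_k-n_{k+1}+1)_{k+1}$ if $b\ge n_k$.
   Context: For an integer $\ell$, $\ell_k$ and $\ell_{k+1}$ (also written $(\ell)_k,(\ell)_{k+1}$) denote the least nonnegative residues of $\ell$ modulo $k$ and $k+1$. $G(n,k)$ is the directed graph on vertices $0,1,\dots,k$ whose edges are exactly the $k$ edges $(i+n-2)_{k+1}\to(i+n-1)_k$, $1\le i\le k$. *)

From Stdlib Require Import ZArith.
Open Scope Z_scope.

(* least nonnegative residue of l modulo m (for m >= 1); Z.modulo gives exactly this *)
Definition res (l m : Z) : Z := l mod m.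

Definition is_edge (n k a b : Z) : Prop :=
  exists i : Z, 1 <= i <= k /\ a = res (i + n - 2) (k + 1) /\ b = res (i + n - 1) k.

(** Write [m = i + n - 1], so that the edge is [(m - 1) mod (k+1) -> m mod k].
    Since [x mod k = x - k (x / k)] and [-k = 1] modulo [k + 1], the length of
    the edge is [m / k + 1] and [n mod k - n mod (k+1)] is [n / k], both modulo
    [k + 1].  As [m = n + (i - 1)] with [0 <= i - 1 < k], the quotient [m / k]
    exceeds [n / k] by the carry of that addition, which is [1] exactly when
    [m mod k < n mod k]. *)
From Stdlib Require Import ZArith Lia.
Open Scope Z_scope.

Lemma mod_sub_mod_succ (k x y c : Z) : 0 < k ->
  (x mod k - y mod (k + 1) + c) mod (k + 1) = (x / k + (x - y) + c) mod (k + 1).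
Proof.
  intro hk.
  rewrite (Z.mod_eq x k), (Z.mod_eq y (k + 1)) by lia.
  replace (x - k * (x / k) - (y - (k + 1) * (y / (k + 1))) + c)
    with (x / k + (x - y) + c + (y / (k + 1) - x / k) * (k + 1)) by ring.
  apply Z_mod_plus_full.
Qed.

Lemma edge_length_mod (k x : Z) : 0 < k ->
  (x mod k - (x - 1) mod (k + 1)) mod (k + 1) = (x / k + 1) mod (k + 1).
Proof.
  intro hk.
  rewrite <- (Z.add_0_r (_ - _)), mod_sub_mod_succ by exact hk.
  f_equal; ring.
Qed.

Lemma div_add_carry (k n d : Z) : 0 < k -> 0 <= d < k ->
  ((n + d) mod k < n mod k -> (n + d) / k = n / k + 1) /\
  (n mod k <= (n + d) mod k -> (n + d) / k = n / k).
Proof.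
  intros hk hd.
  pose proof (Z.div_mod n k ltac:(lia)).
  pose proof (Z.div_mod (n + d) k ltac:(lia)).
  pose proof (Z.mod_pos_bound n k hk).
  pose proof (Z.mod_pos_bound (n + d) k hk).
  assert (carry_bounds : 0 <= (n + d) / k - n / k <= 1) by nia.
  split; intro hmod; nia.
Qed.

Theorem lemma7p4 (k n a b : Z) (hk : 1 <= k) (he : is_edge n k a b) :
  (b <= res n k - 1 -> res (b - a) (k + 1) = res (res n k - res n (k + 1) + 2) (k + 1)) /\
  (res n k <= b -> res (b - a) (k + 1) = res (res n k - res n (k + 1) + 1) (k + 1)).
Proof.
  destruct he as [i [hi [-> ->]]]; unfold res.
  replace (i + n - 2) with (n + (i - 1) - 1) by ring.
  replace (i + n - 1) with (n + (i - 1)) by ring.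
  rewrite edge_length_mod, !mod_sub_mod_succ by lia.
  rewrite Z.sub_diag, !Z.add_0_r.
  destruct (div_add_carry k n (i - 1)) as [carry no_carry]; try lia.
  split; intro hb.
  - rewrite carry by lia; f_equal; ring.
  - rewrite no_carry by lia; reflexivity.
Qed.
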